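(* Let $l\ge1$ and work in $\mathfrak{OA}_{1,2l}=\mathfrak{OA}/\mathfrak I_{(t-1)^{2l}}$, writing $X_k,Y_k$ for the images. Set $H_0=\tfrac12X_0$, $E_0=\tfrac14Y_1+\tfrac18\big(X_1-\sum_{k=1}^{2l-1}(-1)^kX_k\big)$, $F_0=\tfrac14Y_1-\tfrac18\big(X_1-\sum_{k=1}^{2l-1}(-1)^kX_k\big)$, $H_1=[E_0,F_0]$, and inductively $E_{j+1}=\tfrac12[H_1,E_j]$, $F_{j+1}=-\tfrac12[H_1,F_j]$ for $0\le j\le l-2$. Then: (i) $[E_{j+1},F_{k-1}]=[E_j,F_k]$ whenever $0\le j\le l-2$ and $1\le k\le l-1$; hence $H_m:=[E_j,F_k]$ with $j+k+1=m$ ($0\le j,k\le l-1$) is well defined for $1\le m\le 2l-1$, and agrees with $H_1$ for $m=1$. (ii) $\{E_j,F_j,H_j:0\le j\le l-1\}$ is a basis of $\mathfrak{OA}_{1,2l}$, and $H_m=0$ for $l\le m\le 2l-1$. (iii) For $0\le j,k\le l-1$: $[E_j,F_k]=H_{j+k+1}$, $[H_j,E_k]=2E_{j+k}$, $[H_j,F_k]=-2F_{j+k}$, $[E_j,E_k]=0$, $[F_j,F_k]=0$, where any $E_m,F_m,H_m$ with $m\ge l$ is interpreted as $0$.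
   Context: Work over $\mathbb C$. $\mathfrak{sl}_2$ has basis $e,f,h$ with $[e,f]=h$, $[h,e]=2e$, $[h,f]=-2f$. The Onsager algebra is the Lie subalgebra $\mathfrak{OA}=\{p(t)e+p(t^{-1})f+q(t)h:\ p,q\in\mathbb C[t,t^{-1}],\ q(t^{-1})=-q(t)\}$ of the loop algebra $\mathbb C[t,t^{-1}]\otimes\mathfrak{sl}_2$ (bracket $[px,qy]=pq[x,y]$). $\mathfrak I_{(t-1)^L}=\{p(t)e+p(t^{-1})f+q(t)h\in\mathfrak{OA}: p,q\in(t-1)^L\mathbb C[t,t^{-1}]\}$. For $k\ge0$, $X_k=2(t-1)^ke+2(t^{-1}-1)^kf$ and $Y_k=(-1)^k\big((t-1)^k-(t^{-1}-1)^k\big)h$, elements of $\mathfrak{OA}$. *)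

From mathcomp Require Import all_boot all_algebra.
From mathcomp Require Import reals complex.
Set Implicit Arguments.
Unset Strict Implicit.
Unset Printing Implicit Defensive.
Import GRing.Theory Num.Theory.
Local Open Scope ring_scope.

Section Onsager.
Variable R : realType.
Local Notation C := (R[i]).

(* sl_2 realised as traceless 2x2 matrices: e = E_01, f = E_10, h = E_00 - E_11;
   then [e,f] = h, [h,e] = 2e, [h,f] = -2f for the commutator bracket. *)
Definition sl2e : 'M[C]_2 := delta_mx 0 1.
Definition sl2f : 'M[C]_2 := delta_mx 1 0.
Definition sl2h : 'M[C]_2 := delta_mx 0 0 - delta_mx 1 1.

(* Loop algebra C[t,t^-1] (x) sl_2, with Laurent polynomials viewed as
   (polynomial) functions on C^x = C \ {0}; only values at z != 0 matter. *)
Definition loop := C -> 'M[C]_2.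

Definition laurent (p : C -> C) : Prop :=
  exists (P : {poly C}) (n : nat), forall z : C, z != 0 -> p z = P.[z] / z ^+ n.

Definition mkL (p q r : C -> C) : loop :=
  fun z => p z *: sl2e + q z *: sl2f + r z *: sl2h.

Definition OA_elt (p q : C -> C) : loop := mkL p (fun z => p z^-1) q.

Definition in_OA (x : loop) : Prop :=
  exists p q : C -> C, [/\ laurent p, laurent q,
    (forall z : C, z != 0 -> q z^-1 = - q z) &
    (forall z : C, z != 0 -> x z = OA_elt p q z)].

Definition divisible (L : nat) (p : C -> C) : Prop :=
  exists g : C -> C, laurent g /\ forall z : C, z != 0 -> p z = (z - 1) ^+ L * g z.

Definition in_I (L : nat) (x : loop) : Prop :=
  exists p q : C -> C, [/\ laurent p, laurent q,
    (forall z : C, z != 0 -> q z^-1 = - q z),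
    divisible L p /\ divisible L q &
    (forall z : C, z != 0 -> x z = OA_elt p q z)].

Definition lzero : loop := fun _ => 0.
Definition ladd (x y : loop) : loop := fun z => x z + y z.
Definition lsub (x y : loop) : loop := fun z => x z - y z.
Definition lscale (c : C) (x : loop) : loop := fun z => c *: x z.
Definition lbr (x y : loop) : loop := fun z => x z *m y z - y z *m x z.

(* equality of images in OA / I_{(t-1)^L} (for representatives in OA) *)
Definition qeq (L : nat) (x y : loop) : Prop := in_I L (lsub x y).

Definition X (k : nat) : loop :=
  mkL (fun z => 2%:R * (z - 1) ^+ k) (fun z => 2%:R * (z^-1 - 1) ^+ k) (fun _ => 0).
Definition Y (k : nat) : loop :=
  mkL (fun _ => 0) (fun _ => 0)
      (fun z => (-1) ^+ k * ((z - 1) ^+ k - (z^-1 - 1) ^+ k)).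

Variable l : nat.

Definition H0 : loop := lscale (2%:R)^-1 (X 0).
Definition Ssum : loop :=
  fun z => X 1 z - \sum_(1 <= k < (2 * l)%N) (-1) ^+ k *: X k z.
Definition E0 : loop := fun z => (4%:R)^-1 *: Y 1 z + (8%:R)^-1 *: Ssum z.
Definition F0 : loop := fun z => (4%:R)^-1 *: Y 1 z - (8%:R)^-1 *: Ssum z.
Definition H1 : loop := lbr E0 F0.

Fixpoint E (j : nat) : loop :=
  match j with
  | 0 => E0
  | j'.+1 => lscale (2%:R)^-1 (lbr H1 (E j'))
  end.
Fixpoint F (j : nat) : loop :=
  match j with
  | 0 => F0
  | j'.+1 => lscale (- (2%:R)^-1) (lbr H1 (F j'))
  end.

(* H_0 = X_0/2 and, for m >= 1, H_m := [E_j, F_k] for one particular choice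
   j + k + 1 = m with 0 <= j,k <= l-1 (namely j = min(m-1, l-1)). *)
Definition H (m : nat) : loop :=
  if m is m'.+1 then lbr (E (minn m' l.-1)) (F (m' - minn m' l.-1))
  else H0.

Definition Ez (m : nat) : loop := if (m < l)%N then E m else lzero.
Definition Fz (m : nat) : loop := if (m < l)%N then F m else lzero.
Definition Hz (m : nat) : loop := if (m < l)%N then H m else lzero.

Definition lincomb (a b c : nat -> C) : loop :=
  fun z => \sum_(j < l) (a j *: E j z + b j *: F j z + c j *: H j z).

End Onsager.

Arguments X : clear implicits.
Arguments Y : clear implicits.
Arguments H0 : clear implicits.
Arguments Ssum : clear implicits.
Arguments E0 : clear implicits.
Arguments F0 : clear implicits.
Arguments H1 : clear implicits.
Arguments E : clear implicits.
Arguments F : clear implicits.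
Arguments H : clear implicits.
Arguments Ez : clear implicits.
Arguments Fz : clear implicits.
Arguments Hz : clear implicits.
Arguments lzero : clear implicits.
Arguments lincomb : clear implicits.

(* Write [p(t) e + p(t^-1) f + q(t) h] as the pair [(p, q)] and put
   [sh = (t - t^-1) / 2], [v = sh^2].  As [sh = (t - 1) (t + 1) / (2 t)], modulo
   [(t - 1)^(2l)] every Laurent polynomial is congruent to a unique polynomial
   of degree [< 2l] in [sh]; sorting by parity, [OA / I_{(t-1)^(2l)}] has the basis
   [v^j sh (e - f - h) / 2], [- v^j sh (e - f + h) / 2], [v^j (e + f)] ([j < l]),
   which satisfies the relations of (iii) on the nose, with [v^l = 0].  The
   alternating sum in [E_0], [F_0] is a truncated geometric series in [1 - t],
   so [E_0], [F_0] are congruent to the [j = 0] basis vectors, and the recursive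
   definitions carry this over to every [E_j], [F_j], [H_j]. *)

From mathcomp Require Import all_boot all_algebra.
From mathcomp Require Import reals complex.
From mathcomp Require Import ring.
Import GRing.Theory Num.Theory.
Local Open Scope ring_scope.
Set Implicit Arguments.
Unset Strict Implicit.

Section Laurent.
Variable R : realType.
Local Notation C := (R[i]).
Implicit Types (p q g h : C -> C).

Lemma eq_laurent p q : (forall z, z != 0 -> p z = q z) -> laurent p -> laurent q.
Proof. by move=> epq [P [n hP]]; exists P, n => z nz; rewrite -epq // hP. Qed.

Lemma laurent_poly (P : {poly C}) : laurent (fun z => P.[z]).
Proof. by exists P, 0%N => z _; rewrite expr0 divr1. Qed.

Lemma laurent_cst (c : C) : laurent (fun _ => c).
Proof. by apply: eq_laurent (laurent_poly c%:P) => z _; rewrite hornerC. Qed.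

Lemma laurent_id : laurent (fun z : C => z).
Proof. by apply: eq_laurent (laurent_poly 'X) => z _; rewrite hornerX. Qed.

Lemma laurent_inv : laurent (fun z : C => z^-1).
Proof. by exists 1, 1%N => z _; rewrite hornerC expr1 div1r. Qed.

Lemma laurentD p q : laurent p -> laurent q -> laurent (fun z => p z + q z).
Proof.
move=> [P [n hP]] [Q [m hQ]]; exists (P * 'X^m + Q * 'X^n), (n + m)%N => z nz.
rewrite hP // hQ // !hornerE exprD.
have := expf_neq0 n nz; have := expf_neq0 m nz.
by move: (z ^+ n) (z ^+ m) => a b ha hb; field; rewrite ha hb.
Qed.

Lemma laurentM p q : laurent p -> laurent q -> laurent (fun z => p z * q z).
Proof.
move=> [P [n hP]] [Q [m hQ]]; exists (P * Q), (n + m)%N => z nz.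
rewrite hP // hQ // hornerM exprD.
have := expf_neq0 n nz; have := expf_neq0 m nz.
by move: (z ^+ n) (z ^+ m) => a b ha hb; field; rewrite ha hb.
Qed.

Lemma laurentN p : laurent p -> laurent (fun z => - p z).
Proof.
by move=> lp; apply: eq_laurent (laurentM (laurent_cst (-1)) lp) => z _; rewrite mulN1r.
Qed.

Lemma laurentB p q : laurent p -> laurent q -> laurent (fun z => p z - q z).
Proof. by move=> lp lq; apply: laurentD lp (laurentN lq). Qed.

Lemma laurentX p n : laurent p -> laurent (fun z => p z ^+ n).
Proof.
move=> lp; elim: n => [|n IHn].
  by apply: eq_laurent (laurent_cst 1) => z _; rewrite expr0.
by apply: eq_laurent (laurentM lp IHn) => z _; rewrite exprS.
Qed.

Lemma laurent_sum (I : Type) (r : seq I) (P : pred I) (f : I -> C -> C) :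
  (forall i, laurent (f i)) -> laurent (fun z => \sum_(i <- r | P i) f i z).
Proof.
move=> lf; elim: r => [|i r IHr].
  by apply: eq_laurent (laurent_cst 0) => z _; rewrite big_nil.
case Pi: (P i).
  by apply: eq_laurent (laurentD (lf i) IHr) => z _; rewrite big_cons Pi.
by apply: eq_laurent IHr => z _; rewrite big_cons Pi.
Qed.

Lemma laurent_compV p : laurent p -> laurent (fun z => p z^-1).
Proof.
move=> [P [n hP]].
have lPV : laurent (fun z => P.[z^-1]).
  elim/poly_ind: P {hP} => [|Q c IHQ].
    by apply: eq_laurent (laurent_cst 0) => z _; rewrite horner0.
  apply: eq_laurent (laurentD (laurentM IHQ laurent_inv) (laurent_cst c)) => z _.
  by rewrite !hornerE.
apply: eq_laurent (laurentM lPV (laurentX n laurent_id)) => z nz.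
by rewrite hP ?invr_eq0 // exprVn invrK.
Qed.

Lemma laurent_divisible1 g : laurent g -> divisible 1 (fun z => g z - g 1).
Proof.
move=> [G [m hG]].
have /factor_theorem [Q eQ] : root (G - G.[1] *: 'X^m) 1.
  by rewrite /root !hornerE expr1n mulr1 subrr.
exists (fun z => Q.[z] / z ^+ m); split.
  apply: laurentM (laurent_poly Q) _.
  by apply: eq_laurent (laurentX m laurent_inv) => z _; rewrite exprVn.
move=> z nz; have /(congr1 (horner^~ z)) := eQ; rewrite !hornerE => eGQ.
have {}eGQ : G.[z] = G.[1] * z ^+ m + Q.[z] * (z - 1) by rewrite -eGQ addrC subrK.
suff -> : g z - g 1 = (z - 1) ^+ 1 * Q.[z] / z ^+ m by [].
rewrite hG // hG ?oner_neq0 // expr1n divr1 eGQ.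
by move: (z ^+ m) (expf_neq0 m nz) => M nzM; field.
Qed.

End Laurent.

Ltac laurent_closure :=
  repeat match goal with
  | |- laurent (fun _ => ?c) => apply: laurent_cst
  | |- laurent (fun _ => _ - _) => apply: laurentB
  | |- laurent (fun _ => _ + _) => apply: laurentD
  | |- laurent (fun _ => - _) => apply: laurentN
  | |- laurent (fun _ => _ * _) => apply: laurentM
  | |- laurent (fun _ => _ ^+ _) => apply: laurentX
  | |- laurent _ => first [ assumption | apply: laurent_id | apply: laurent_inv
                          | apply: eq_laurent (laurent_inv _) => ? _; reflexivity ]
  end.

Section Divisible.
Variable R : realType.
Local Notation C := (R[i]).
Implicit Types (p q g h : C -> C) (M N : nat).

Lemma eq_divisible N p q :
  (forall z, z != 0 -> p z = q z) -> divisible N p -> divisible N q.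
Proof. by move=> epq [g [lg hp]]; exists g; split=> // z nz; rewrite -epq // hp. Qed.

Lemma divisible0 N : divisible N (fun _ : C => 0).
Proof. by exists (fun _ => 0); split=> [|z _]; rewrite ?mulr0 //; apply: laurent_cst. Qed.

Lemma divisibleD N p q :
  divisible N p -> divisible N q -> divisible N (fun z => p z + q z).
Proof.
move=> [g [lg hp]] [h [lh hq]]; exists (fun z => g z + h z); split.
  exact: laurentD.
by move=> z nz; rewrite hp // hq // mulrDr.
Qed.

Lemma divisibleMl N h p : laurent h -> divisible N p -> divisible N (fun z => h z * p z).
Proof.
move=> lh [g [lg hp]]; exists (fun z => h z * g z); split; first exact: laurentM.
by move=> z nz; rewrite hp // mulrCA.
Qed.

Lemma divisibleN N p : divisible N p -> divisible N (fun z => - p z).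
Proof.
move=> dp; apply: eq_divisible (divisibleMl (laurent_cst (-1)) dp) => z _.
by rewrite mulN1r.
Qed.

Lemma divisible_mulXsubn M N p :
  divisible N p -> divisible (M + N) (fun z => (z - 1) ^+ M * p z).
Proof.
move=> [g [lg hp]]; exists g; split=> // z nz.
by rewrite hp // exprD mulrA.
Qed.

Lemma divisible_leq M N p : (M <= N)%N -> divisible N p -> divisible M p.
Proof.
move=> /subnKC <- [g [lg hp]].
exists (fun z => (z - 1) ^+ (N - M) * g z); split.
  by laurent_closure.
by move=> z nz; rewrite hp // exprD mulrA.
Qed.

(* [t^-1 - 1 = (t - 1) (-t^-1)] with [-t^-1] a unit of the Laurent ring. *)
Lemma divisible_compV N p : divisible N p -> divisible N (fun z => p z^-1).
Proof.
move=> [g [lg hp]]; exists (fun z => (- z^-1) ^+ N * g z^-1); split.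
  by apply: laurentM (laurent_compV lg); laurent_closure.
move=> z nz; rewrite hp ?invr_eq0 // mulrA -exprMn.
by congr (_ ^+ _ * _); field.
Qed.

Definition eqmod N p q := divisible N (fun z => p z - q z).

Lemma eqmod_eq N p q : (forall z, z != 0 -> p z = q z) -> eqmod N p q.
Proof. by move=> epq; apply: eq_divisible (divisible0 N) => z nz; rewrite epq ?subrr. Qed.

Lemma eqmod_refl N p : eqmod N p p.
Proof. exact: eqmod_eq. Qed.

Lemma eqmod_sym N p q : eqmod N p q -> eqmod N q p.
Proof. by move/divisibleN; apply: eq_divisible => z _; rewrite opprB. Qed.

Lemma eqmod_trans N p q g : eqmod N p q -> eqmod N q g -> eqmod N p g.
Proof. by move=> dpq dqg; apply: eq_divisible (divisibleD dpq dqg) => z _; rewrite addrA subrK. Qed.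

Lemma eqmodD N p1 p2 q1 q2 :
  eqmod N p1 p2 -> eqmod N q1 q2 -> eqmod N (fun z => p1 z + q1 z) (fun z => p2 z + q2 z).
Proof. by move=> dp dq; apply: eq_divisible (divisibleD dp dq) => z _; rewrite addrACA opprD. Qed.

Lemma eqmodB N p1 p2 q1 q2 :
  eqmod N p1 p2 -> eqmod N q1 q2 -> eqmod N (fun z => p1 z - q1 z) (fun z => p2 z - q2 z).
Proof.
by move=> dp /divisibleN dq; apply: eq_divisible (divisibleD dp dq) => z _; ring.
Qed.

Lemma eqmodMl N h p q :
  laurent h -> eqmod N p q -> eqmod N (fun z => h z * p z) (fun z => h z * q z).
Proof. by move=> lh dpq; apply: eq_divisible (divisibleMl lh dpq) => z _; rewrite mulrBr. Qed.

Lemma eqmodM N p1 p2 q1 q2 : laurent p1 -> laurent q2 ->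
  eqmod N p1 p2 -> eqmod N q1 q2 -> eqmod N (fun z => p1 z * q1 z) (fun z => p2 z * q2 z).
Proof.
move=> lp1 lq2 dp dq.
by apply: eq_divisible (divisibleD (divisibleMl lp1 dq) (divisibleMl lq2 dp)) => z _; ring.
Qed.

Lemma eqmod_compV N p q : eqmod N p q -> eqmod N (fun z => p z^-1) (fun z => q z^-1).
Proof. exact: divisible_compV. Qed.

End Divisible.

Section Sl2Coordinates.
Variable R : realType.
Local Notation C := (R[i]).

Definition sl2 (a b c : C) : 'M[C]_2 := a *: sl2e R + b *: sl2f R + c *: sl2h R.

Lemma ord2P (i : 'I_2) : i = 0 \/ i = 1.
Proof. by case: i => [[|[|i]] hi]; [left|right|]; try apply: val_inj. Qed.

Lemma sl2E a b c i j :
  sl2 a b c i j = if i == 0 then (if j == 0 then c else a) else (if j == 0 then b else - c).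
Proof.
rewrite /sl2 /sl2e /sl2f /sl2h !mxE.
by case: (ord2P i) => ->; case: (ord2P j) => -> /=; ring.
Qed.

Lemma sl2_bracket a1 b1 c1 a2 b2 c2 :
  sl2 a1 b1 c1 *m sl2 a2 b2 c2 - sl2 a2 b2 c2 *m sl2 a1 b1 c1 =
  sl2 (2%:R * (c1 * a2 - a1 * c2)) (2%:R * (b1 * c2 - c1 * b2)) (a1 * b2 - b1 * a2).
Proof.
apply/matrixP => i j; rewrite !mxE !big_ord_recl !big_ord0 !sl2E.
by case: (ord2P i) => ->; case: (ord2P j) => -> /=; ring.
Qed.

Lemma sl2_inj a1 b1 c1 a2 b2 c2 :
  sl2 a1 b1 c1 = sl2 a2 b2 c2 -> [/\ a1 = a2, b1 = b2 & c1 = c2].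
Proof.
move=> e; have := congr1 (fun M : 'M[C]_2 => M 0 1) e.
have := congr1 (fun M : 'M[C]_2 => M 1 0) e; have := congr1 (fun M : 'M[C]_2 => M 0 0) e.
by rewrite /= !sl2E.
Qed.

Lemma sl20 : sl2 0 0 0 = 0.
Proof. by rewrite /sl2 !scale0r !addr0. Qed.

Lemma sl2D a1 b1 c1 a2 b2 c2 :
  sl2 a1 b1 c1 + sl2 a2 b2 c2 = sl2 (a1 + a2) (b1 + b2) (c1 + c2).
Proof.
apply/matrixP => i j; rewrite mxE !sl2E.
by case: (ord2P i) => ->; case: (ord2P j) => -> /=; ring.
Qed.

Lemma sl2Z k a b c : k *: sl2 a b c = sl2 (k * a) (k * b) (k * c).
Proof. by rewrite /sl2 !scalerDr !scalerA. Qed.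

Lemma sl2B a1 b1 c1 a2 b2 c2 :
  sl2 a1 b1 c1 - sl2 a2 b2 c2 = sl2 (a1 - a2) (b1 - b2) (c1 - c2).
Proof. by rewrite -scaleN1r sl2Z sl2D !mulN1r. Qed.

Lemma sl2_sum (I : Type) (r : seq I) (P : pred I) (a b c : I -> C) :
  \sum_(i <- r | P i) sl2 (a i) (b i) (c i) =
  sl2 (\sum_(i <- r | P i) a i) (\sum_(i <- r | P i) b i) (\sum_(i <- r | P i) c i).
Proof.
elim: r => [|i r IHr]; first by rewrite !big_nil sl20.
by rewrite !big_cons; case: (P i); rewrite // IHr sl2D.
Qed.

End Sl2Coordinates.

Section OnsagerCoordinates.
Variable R : realType.
Local Notation C := (R[i]).

(* [(p, q)] stands for [p(t) e + p(t^-1) f + q(t) h]. *)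
Definition oa := ((C -> C) * (C -> C))%type.

Implicit Types (a b m : oa) (x y : loop R) (N : nat).

Definition antisym (q : C -> C) := forall z, z != 0 -> q z^-1 = - q z.
Definition oa_wf a := [/\ laurent a.1, laurent a.2 & antisym a.2].
Definition represents x a := forall z, z != 0 -> x z = OA_elt a.1 a.2 z.

Definition oa0 : oa := (fun _ => 0, fun _ => 0).
Definition oa_add a b : oa := (fun z => a.1 z + b.1 z, fun z => a.2 z + b.2 z).
Definition oa_scale (c : C) a : oa := (fun z => c * a.1 z, fun z => c * a.2 z).
Definition oa_sum (I : Type) (r : seq I) (P : pred I) (f : I -> oa) : oa :=
  (fun z => \sum_(i <- r | P i) (f i).1 z, fun z => \sum_(i <- r | P i) (f i).2 z).
Definition oa_br a b : oa :=
  (fun z => 2%:R * (a.2 z * b.1 z - a.1 z * b.2 z),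
   fun z => a.1 z * b.1 z^-1 - a.1 z^-1 * b.1 z).

Definition oa_eq a b := forall z, z != 0 -> a.1 z = b.1 z /\ a.2 z = b.2 z.
Definition oa_eqmod N a b := eqmod N a.1 b.1 /\ eqmod N a.2 b.2.

Lemma oa_wf0 : oa_wf oa0.
Proof. by split; [apply: laurent_cst..|] => z _; rewrite oppr0. Qed.

Lemma oa_wf_add a b : oa_wf a -> oa_wf b -> oa_wf (oa_add a b).
Proof.
case=> la1 la2 aa [lb1 lb2 ab]; split; try exact: laurentD.
by move=> z nz /=; rewrite aa // ab // opprD.
Qed.

Lemma oa_wf_scale c a : oa_wf a -> oa_wf (oa_scale c a).
Proof.
case=> l1 l2 aa; split; try exact: laurentM (laurent_cst c) _.
by move=> z nz /=; rewrite aa // mulrN.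
Qed.

Lemma oa_wf_br a b : oa_wf a -> oa_wf b -> oa_wf (oa_br a b).
Proof.
case=> la1 la2 _ [lb1 lb2 _]; split => /=.
- by apply: laurentM (laurent_cst _) _; apply: laurentB; apply: laurentM.
- by apply: laurentB; apply: laurentM => //; apply: laurent_compV.
- by move=> z nz; rewrite invrK; ring.
Qed.

Lemma represents0 : represents (lzero R) oa0.
Proof. by move=> z _; rewrite /OA_elt /mkL -/(sl2 _ _ _) sl20. Qed.

Lemma represents_add x y a b :
  represents x a -> represents y b -> represents (ladd x y) (oa_add a b).
Proof. by move=> rx ry z nz; rewrite /ladd rx // ry // /OA_elt /mkL -!/(sl2 _ _ _) sl2D. Qed.

Lemma represents_scale c x a : represents x a -> represents (lscale c x) (oa_scale c a).
Proof. by move=> rx z nz; rewrite /lscale rx // /OA_elt /mkL -!/(sl2 _ _ _) sl2Z. Qed.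

(* Antisymmetry of the [h]-coefficients is what makes the [f]-coefficient of
   the bracket the [t^-1]-twist of its [e]-coefficient. *)
Lemma represents_br x y a b : oa_wf a -> oa_wf b ->
  represents x a -> represents y b -> represents (lbr x y) (oa_br a b).
Proof.
case=> _ _ aa [_ _ ab] rx ry z nz.
rewrite /lbr rx // ry // /OA_elt /mkL -!/(sl2 _ _ _) sl2_bracket /=.
by rewrite aa // ab //; congr sl2; ring.
Qed.

Lemma oa_eqmod_eq N a b : oa_eq a b -> oa_eqmod N a b.
Proof. by move=> eab; split; apply: eqmod_eq => z nz; case: (eab z nz). Qed.

Lemma oa_eqmod_refl N a : oa_eqmod N a a.
Proof. by split; apply: eqmod_refl. Qed.

Lemma oa_eqmod_sym N a b : oa_eqmod N a b -> oa_eqmod N b a.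
Proof. by case=> e1 e2; split; apply: eqmod_sym. Qed.

Lemma oa_eqmod_trans N a b m : oa_eqmod N a b -> oa_eqmod N b m -> oa_eqmod N a m.
Proof. by case=> e1 e2 [f1 f2]; split; apply: eqmod_trans; eassumption. Qed.

Lemma oa_eqmod_add N a a' b b' :
  oa_eqmod N a a' -> oa_eqmod N b b' -> oa_eqmod N (oa_add a b) (oa_add a' b').
Proof. by case=> e1 e2 [f1 f2]; split; apply: eqmodD. Qed.

Lemma oa_eqmod_scale N c a a' : oa_eqmod N a a' -> oa_eqmod N (oa_scale c a) (oa_scale c a').
Proof. by case=> e1 e2; split; apply: eqmodMl (laurent_cst c) _. Qed.

Lemma oa_eqmod_br N a a' b b' : oa_wf a -> oa_wf a' -> oa_wf b -> oa_wf b' ->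
  oa_eqmod N a a' -> oa_eqmod N b b' -> oa_eqmod N (oa_br a b) (oa_br a' b').
Proof.
case=> la1 la2 _ [la1' la2' _] [lb1 lb2 _] [lb1' lb2' _] [e1 e2] [f1 f2]; split.
  by apply: eqmodMl (laurent_cst _) _; apply: eqmodB; apply: eqmodM.
by apply: eqmodB; apply: eqmodM => //; apply: laurent_compV || apply: eqmod_compV.
Qed.

End OnsagerCoordinates.

Section Congruence.
Variables (R : realType) (N : nat).
Local Notation C := (R[i]).
Implicit Types (a b m : oa R) (x y : loop R).

Definition models x m := exists a, [/\ represents x a, oa_wf a & oa_eqmod N a m].

Lemma represents_models x a : represents x a -> oa_wf a -> models x a.
Proof. by move=> rx wa; exists a; split=> //; apply: oa_eqmod_refl. Qed.

Lemma models_eqmod x m m' : models x m -> oa_eqmod N m m' -> models x m'.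
Proof. by case=> a [rx wa em] emm'; exists a; split=> //; apply: oa_eqmod_trans em emm'. Qed.

Lemma models_ext x y m : (forall z, z != 0 -> x z = y z) -> models x m -> models y m.
Proof. by move=> exy [a [rx wa ea]]; exists a; split=> // z nz; rewrite -exy // rx. Qed.

Lemma models_in_OA x m : models x m -> in_OA x.
Proof. by case=> a [rx [l1 l2 an] _]; exists a.1, a.2. Qed.

Lemma models0 : models (lzero R) (oa0 R).
Proof. by apply: represents_models; [apply: represents0 | apply: oa_wf0]. Qed.

Lemma models_add x y m m' : models x m -> models y m' -> models (ladd x y) (oa_add m m').
Proof.
case=> a [rx wa ea] [b [ry wb eb]]; exists (oa_add a b); split.
- exact: represents_add.
- exact: oa_wf_add.
- exact: oa_eqmod_add.
Qed.

Lemma models_scale c x m : models x m -> models (lscale c x) (oa_scale c m).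
Proof.
case=> a [rx wa ea]; exists (oa_scale c a); split.
- exact: represents_scale.
- exact: oa_wf_scale.
- exact: oa_eqmod_scale.
Qed.

Lemma models_sum (I : Type) (r : seq I) (P : pred I) (x : I -> loop R) (f : I -> oa R) :
  (forall i, models (x i) (f i)) ->
  models (fun z => \sum_(i <- r | P i) x i z) (oa_sum r P f).
Proof.
move=> xf; elim: r => [|i r IHr].
  apply: models_ext (models_eqmod models0 _) => [z _|]; first by rewrite big_nil.
  by apply: oa_eqmod_eq => z _; rewrite /= !big_nil.
case Pi: (P i).
  apply: models_ext (models_eqmod (models_add (xf i) IHr) _) => [z _|].
    by rewrite big_cons Pi.
  by apply: oa_eqmod_eq => z _; rewrite /= !big_cons Pi.
apply: models_ext (models_eqmod IHr _) => [z _|]; first by rewrite big_cons Pi.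
by apply: oa_eqmod_eq => z _; rewrite /= !big_cons Pi.
Qed.

Lemma models_br x y m m' : oa_wf m -> oa_wf m' ->
  models x m -> models y m' -> models (lbr x y) (oa_br m m').
Proof.
move=> wm wm' [a [rx wa ea]] [b [ry wb eb]]; exists (oa_br a b); split.
- exact: represents_br.
- exact: oa_wf_br.
- exact: oa_eqmod_br.
Qed.

Lemma models_bracket x y m m' r : oa_wf m -> oa_wf m' ->
  models x m -> models y m' -> oa_eq (oa_br m m') r -> models (lbr x y) r.
Proof.
by move=> wm wm' mx my e; apply: models_eqmod (models_br wm wm' mx my) (oa_eqmod_eq _ e).
Qed.

Lemma X_models k : models (X R k) (fun z => 2%:R * (z - 1) ^+ k, fun _ => 0).
Proof.
apply: represents_models => //.
by split=> /=; [laurent_closure | laurent_closure | move=> z _; rewrite oppr0].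
Qed.

Lemma qeq_models x y m : models x m -> models y m -> qeq N x y.
Proof.
case=> a [rx [la1 la2 aa] ea] [b [ry [lb1 lb2 ab] eb]].
have [d1 d2] := oa_eqmod_trans ea (oa_eqmod_sym eb).
exists (fun z => a.1 z - b.1 z), (fun z => a.2 z - b.2 z); split.
- exact: laurentB.
- exact: laurentB.
- by move=> z nz /=; rewrite aa // ab //; ring.
- by [].
- by move=> z nz; rewrite /lsub rx // ry // /OA_elt /mkL -!/(sl2 _ _ _) sl2B.
Qed.

Lemma models_in_I x m : models x m -> in_I N x -> oa_eqmod N m (oa0 R).
Proof.
case=> a [rx _ ea] [p [q [_ _ _ [dp dq] ex]]].
apply: oa_eqmod_trans (oa_eqmod_sym ea) _; split.
- apply: eq_divisible dp => z nz; have := rx z nz; rewrite ex // /OA_elt /mkL -!/(sl2 _ _ _).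
  by case/sl2_inj => -> _ _; rewrite subr0.
- apply: eq_divisible dq => z nz; have := rx z nz; rewrite ex // /OA_elt /mkL -!/(sl2 _ _ _).
  by case/sl2_inj => _ _ ->; rewrite subr0.
Qed.

End Congruence.

Section ModelElements.
Variable R : realType.
Local Notation C := (R[i]).
Implicit Types (z : C) (j k n : nat).

(* [sh (e^s) = sinh s]; it vanishes to first order at [t = 1]. *)
Definition sh z := (z - z^-1) / 2%:R.
Definition sh_div z := (z + 1) / (2%:R * z).

Lemma two_neq0 : 2%:R != 0 :> C.
Proof. by rewrite pnatr_eq0. Qed.

Lemma sh_compV z : z != 0 -> sh z^-1 = - sh z.
Proof. by move=> nz; rewrite /sh invrK; ring. Qed.

Lemma sh_factor z : z != 0 -> sh z = (z - 1) * sh_div z.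
Proof. by move=> nz; rewrite /sh /sh_div; field; rewrite ?two_neq0 ?nz. Qed.

Lemma laurent_sh : laurent sh.
Proof. by rewrite /sh; laurent_closure. Qed.

Lemma laurent_sh_div : laurent sh_div.
Proof.
apply: eq_laurent (laurentM (laurentD (laurent_id R) (laurent_cst 1))
  (laurentM (laurent_cst 2%:R^-1) (laurent_inv R))) => z nz.
by rewrite /sh_div; field; rewrite ?two_neq0 ?nz.
Qed.

Lemma sh_div1 : sh_div 1 = 1.
Proof. by rewrite /sh_div mulr1 divff ?two_neq0. Qed.

Lemma divisible_shX n : divisible n (fun z => sh z ^+ n).
Proof.
exists (fun z => sh_div z ^+ n); split; first exact: laurentX laurent_sh_div.
by move=> z nz; rewrite sh_factor // exprMn.
Qed.

(* With [v = sh^2]: [Em j = v^j sh (e - f - h) / 2], [Fm j = - v^j sh (e - f + h) / 2]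
   and [Hm j = v^j (e + f)]. *)
Definition Em j : oa R :=
  (fun z => sh z ^+ 2 ^+ j * sh z / 2%:R, fun z => - (sh z ^+ 2 ^+ j * sh z / 2%:R)).
Definition Fm j : oa R :=
  (fun z => - (sh z ^+ 2 ^+ j * sh z / 2%:R), fun z => - (sh z ^+ 2 ^+ j * sh z / 2%:R)).
Definition Hm j : oa R := (fun z => sh z ^+ 2 ^+ j, fun _ => 0).

Lemma laurent_Em_coef j : laurent (fun z => sh z ^+ 2 ^+ j * sh z / 2%:R).
Proof. by have := laurent_sh => ?; laurent_closure. Qed.

Lemma oa_wf_Em j : oa_wf (Em j).
Proof.
split; [exact: laurent_Em_coef | exact: laurentN (laurent_Em_coef j) |].
by move=> z nz /=; rewrite sh_compV // sqrrN; ring.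
Qed.

Lemma oa_wf_Fm j : oa_wf (Fm j).
Proof.
split; [exact: laurentN (laurent_Em_coef j) | exact: laurentN (laurent_Em_coef j) |].
by move=> z nz /=; rewrite sh_compV // sqrrN; ring.
Qed.

Lemma oa_wf_Hm j : oa_wf (Hm j).
Proof.
have := laurent_sh => ?; split => /=; [laurent_closure | laurent_closure |].
by move=> z _ /=; rewrite oppr0.
Qed.

Lemma Em_Fm_bracket j k : oa_eq (oa_br (Em j) (Fm k)) (Hm (j + k).+1).
Proof.
move=> z nz; rewrite /= sh_compV // sqrrN (exprS (sh z ^+ 2)) exprD.
by move: (sh z ^+ 2 ^+ j) (sh z ^+ 2 ^+ k) => A B; split; field.
Qed.

Lemma Hm_Em_bracket j k : oa_eq (oa_br (Hm j) (Em k)) (oa_scale 2%:R (Em (j + k))).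
Proof.
move=> z nz; rewrite /= sh_compV // sqrrN exprD.
by move: (sh z ^+ 2 ^+ j) (sh z ^+ 2 ^+ k) => A B; split; field.
Qed.

Lemma Hm_Fm_bracket j k : oa_eq (oa_br (Hm j) (Fm k)) (oa_scale (- 2%:R) (Fm (j + k))).
Proof.
move=> z nz; rewrite /= sh_compV // sqrrN exprD.
by move: (sh z ^+ 2 ^+ j) (sh z ^+ 2 ^+ k) => A B; split; field.
Qed.

Lemma Em_Em_bracket j k : oa_eq (oa_br (Em j) (Em k)) (oa0 R).
Proof.
move=> z nz; rewrite /= sh_compV // sqrrN.
by move: (sh z ^+ 2 ^+ j) (sh z ^+ 2 ^+ k) => A B; split; field.
Qed.

Lemma Fm_Fm_bracket j k : oa_eq (oa_br (Fm j) (Fm k)) (oa0 R).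
Proof.
move=> z nz; rewrite /= sh_compV // sqrrN.
by move: (sh z ^+ 2 ^+ j) (sh z ^+ 2 ^+ k) => A B; split; field.
Qed.

Lemma divisible_sh2X n j : (n <= j)%N -> divisible (2 * n) (fun z => sh z ^+ 2 ^+ j).
Proof.
move=> le_nj; apply: eq_divisible (divisible_leq _ (divisible_shX (2 * j))).
  by move=> z _; rewrite exprM.
by rewrite leq_mul2l le_nj orbT.
Qed.

Lemma divisible_Em_coef n j : (n <= j)%N ->
  divisible (2 * n) (fun z => sh z ^+ 2 ^+ j * sh z / 2%:R).
Proof.
move=> le_nj; have ls := laurent_sh.
apply: eq_divisible (divisibleMl (h := fun z => sh z / 2%:R) _ (divisible_sh2X le_nj)).
  by move=> z _; rewrite mulrC mulrA.
laurent_closure.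
Qed.

Lemma Em_vanish n j : (n <= j)%N -> oa_eqmod (2 * n) (Em j) (oa0 R).
Proof.
move=> le_nj; have dE := divisible_Em_coef le_nj.
by split; [move: dE | move/divisibleN: dE]; apply: eq_divisible => z _; rewrite subr0.
Qed.

Lemma Fm_vanish n j : (n <= j)%N -> oa_eqmod (2 * n) (Fm j) (oa0 R).
Proof.
move/divisible_Em_coef/divisibleN => dF.
by split; move: dF; apply: eq_divisible => z _; rewrite subr0.
Qed.

Lemma Hm_vanish n j : (n <= j)%N -> oa_eqmod (2 * n) (Hm j) (oa0 R).
Proof.
move/divisible_sh2X => dH; split; first by move: dH; apply: eq_divisible => z _; rewrite subr0.
exact: eqmod_refl.
Qed.

End ModelElements.

Lemma XsubC_expansion_eq0 (F : idomainType) (a : F) N (g : nat -> F)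
    (A : nat -> {poly F}) (Q : {poly F}) :
  (forall i, (i < N)%N -> (A i).[a] != 0) ->
  \sum_(i < N) g i *: (('X - a%:P) ^+ i * A i) = ('X - a%:P) ^+ N * Q ->
  forall i, (i < N)%N -> g i = 0.
Proof.
elim: N g A Q => [|N IHN] g A Q nzA eQ i ltiN //.
rewrite big_ord_recl /= expr0 mul1r in eQ.
have g0 : g 0%N = 0.
  have /(congr1 (horner^~ a)) := eQ.
  rewrite /= hornerD horner_sum hornerZ big1 => [|j _]; last first.
    by rewrite hornerZ hornerM horner_exp hornerXsubC subrr expr0n mul0r mulr0.
  rewrite hornerM horner_exp hornerXsubC subrr expr0n mul0r addr0 => /eqP.
  by rewrite mulf_eq0 (negbTE (nzA 0%N isT)) orbF => /eqP.
case: i ltiN => [//|i ltiN].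
apply: (IHN (fun i => g i.+1) (fun i => A i.+1) Q) => // [j ltjN|]; first exact: nzA.
rewrite g0 scale0r add0r in eQ.
have nzX : ('X - a%:P : {poly F}) != 0 by rewrite -size_poly_eq0 size_XsubC.
apply: (mulfI nzX); rewrite mulrA -exprS -eQ mulr_sumr; apply: eq_bigr => j _.
by rewrite -scalerAr mulrA -exprS.
Qed.

Lemma poly_eq_nonzero (F : numDomainType) (P Q : {poly F}) :
  (forall z, z != 0 -> P.[z] = Q.[z]) -> P = Q.
Proof.
move=> ePQ; apply/eqP; rewrite -subr_eq0; apply/eqP.
apply: (@roots_geq_poly_eq0 _ _ [seq i.+1%:R : F | i <- iota 0 (size (P - Q))]).
- apply/allP => _ /mapP [i _ ->].
  by rewrite /root hornerD hornerN ePQ ?subrr // pnatr_eq0.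
- by rewrite map_inj_uniq ?iota_uniq // => i j /eqP; rewrite eqr_nat => /eqP [].
- by rewrite size_map size_iota.
Qed.

Section ShExpansion.
Variable R : realType.
Local Notation C := (R[i]).

Definition sh_poly n (g : nat -> C) z := \sum_(i < n) g i * sh z ^+ i.

Lemma laurent_sh_expansion n p : laurent p -> exists g, eqmod n p (sh_poly n g).
Proof.
move=> lp; elim: n => [|n [g [h [lh eh]]]].
  exists (fun _ => 0), p; split=> // z _.
  by rewrite /sh_poly big_ord0 subr0 expr0 mul1r.
exists (fun i => if i == n then h 1 else g i).
rewrite /eqmod -{1}addn1.
have du := laurent_divisible1 (laurentX n (laurent_sh_div R)); rewrite /= sh_div1 expr1n in du.
have dh := laurent_divisible1 lh.
apply: eq_divisible
  (divisible_mulXsubn n (divisibleD dh (divisibleN (divisibleMl (laurent_cst (h 1)) du)))).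
move=> z nz; rewrite /sh_poly big_ord_recr /= eqxx.
rewrite (eq_bigr (fun i : 'I_n => g i * sh z ^+ i)) => [|i _]; last by rewrite ltn_eqF.
rewrite -/(sh_poly n g z) sh_factor // [((z - 1) * _) ^+ _]exprMn.
have -> : p z = sh_poly n g z + (z - 1) ^+ n * h z by rewrite -eh // addrC subrK.
by move: (sh_div z) (sh_poly n g z) => u P; ring.
Qed.

Lemma sh_poly_divisible_eq0 n g : divisible n (sh_poly n g) -> forall i, (i < n)%N -> g i = 0.
Proof.
move=> [h [[G [m hG]] eh]].
pose A i : {poly C} := ('X + 1%:P) ^+ i * (2%:R *: 'X) ^+ (n - i) * 'X^m.
apply: (@XsubC_expansion_eq0 _ 1 n g A (G * (2%:R *: 'X) ^+ n)).
  move=> i _; rewrite /A !hornerE expr1n !mulr1 -[1 + 1 : C]/(2%:R).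
  by rewrite mulf_neq0 ?expf_neq0 ?pnatr_eq0.
apply: poly_eq_nonzero => z nz.
have sh2z : sh z * (2%:R * z) = (z - 1) * (z + 1) by rewrite /sh; field.
have eR :
    (('X - 1%:P) ^+ n * (G * (2%:R *: 'X) ^+ n)).[z] = (z - 1) ^+ n * G.[z] * (2%:R * z) ^+ n.
  by rewrite !(hornerM, horner_exp, hornerXsubC, hornerZ, hornerX) mulrA.
have eL (i : 'I_n) :
    (g i *: (('X - 1%:P) ^+ i * A i)).[z] = g i * sh z ^+ i * ((2%:R * z) ^+ n * z ^+ m).
  rewrite hornerZ /A.
  rewrite !(hornerM, horner_exp, hornerXsubC, hornerD, hornerC, hornerZ, hornerXn, hornerX).
  have e2z : (2%:R * z) ^+ n = (2%:R * z) ^+ i * (2%:R * z) ^+ (n - i).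
    by rewrite -exprD subnKC // ltnW.
  have -> : g i * sh z ^+ i * ((2%:R * z) ^+ n * z ^+ m) =
            g i * (sh z * (2%:R * z)) ^+ i * ((2%:R * z) ^+ (n - i) * z ^+ m).
    by rewrite [(sh z * _) ^+ _]exprMn e2z; ring.
  by rewrite sh2z [((z - 1) * _) ^+ _]exprMn; ring.
rewrite horner_sum (eq_bigr _ (fun i _ => eL i)) -mulr_suml -/(sh_poly n g z) eh // hG // eR.
by move: (expf_neq0 m nz); move: (z ^+ m) ((z - 1) ^+ n) ((2%:R * z) ^+ n) => M S T nzM; field.
Qed.

Definition sh_poly2 n (al be : nat -> C) z :=
  \sum_(j < n) (al j * sh z ^+ 2 ^+ j + be j * (sh z ^+ 2 ^+ j * sh z)).

Lemma sh_poly_double n g z :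
  sh_poly n.*2 g z = sh_poly2 n (fun j => g j.*2) (fun j => g j.*2.+1) z.
Proof.
rewrite /sh_poly /sh_poly2; elim: n => [|n IHn]; first by rewrite !big_ord0.
rewrite doubleS !big_ord_recr IHn /= -addrA; congr (_ + (_ + _)).
- by rewrite -exprM mul2n.
- by rewrite -exprM mul2n -exprSr.
Qed.

Lemma sh_poly2_divisible_eq0 n al be : divisible n.*2 (sh_poly2 n al be) ->
  forall j, (j < n)%N -> al j = 0 /\ be j = 0.
Proof.
pose g i := if odd i then be i./2 else al i./2.
move=> d j ltjn; have /sh_poly_divisible_eq0 g0 : divisible n.*2 (sh_poly n.*2 g).
  by apply: eq_divisible d => z _; rewrite sh_poly_double /g; apply: eq_bigr => i _;
     rewrite /= odd_double /= uphalf_double half_double.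
split.
- by have := g0 j.*2; rewrite /g odd_double half_double ltn_double; apply.
- have := g0 j.*2.+1; rewrite /g /= odd_double /= uphalf_double; apply.
  by rewrite -doubleS leq_double.
Qed.

Lemma laurent_sh_poly2_expansion n p : laurent p ->
  exists al be, eqmod n.*2 p (sh_poly2 n al be).
Proof.
case/(laurent_sh_expansion n.*2) => g epg; exists (fun j => g j.*2), (fun j => g j.*2.+1).
apply: eqmod_trans epg _; apply: eqmod_eq => z _; exact: sh_poly_double.
Qed.

(* [q = (q(t) - q(t^-1)) / 2] kills the even part of the expansion. *)
Lemma antisym_sh_poly2_expansion n q : laurent q -> antisym q ->
  exists be, eqmod n.*2 q (sh_poly2 n (fun _ => 0) be).
Proof.
move=> lq aq; have [al [be eq]] := laurent_sh_poly2_expansion n lq.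
exists be; have e1 : eqmod n.*2 q (fun z => 2%:R^-1 * (q z - q z^-1)).
  by apply: eqmod_eq => z nz; rewrite aq //; field.
have e2 := eqmodMl (laurent_cst 2%:R^-1) (eqmodB eq (eqmod_compV eq)).
apply: eqmod_trans (eqmod_trans e1 e2) (eqmod_eq _ _) => z nz.
rewrite /sh_poly2 -sumrB mulr_sumr; apply: eq_bigr => j _.
by rewrite sh_compV // sqrrN; field.
Qed.

End ShExpansion.

Section ModelBasis.
Variable R : realType.
Local Notation C := (R[i]).

Definition comb n (a b c : nat -> C) : oa R :=
  oa_sum (index_enum 'I_n) xpredT (fun j : 'I_n =>
    oa_add (oa_add (oa_scale (a j) (Em R j)) (oa_scale (b j) (Fm R j))) (oa_scale (c j) (Hm R j))).

Lemma comb_sh_poly2 n a b c : oa_eq (comb n a b c)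
  (sh_poly2 n c (fun j => (a j - b j) / 2%:R),
   sh_poly2 n (fun _ => 0) (fun j => - (a j + b j) / 2%:R)).
Proof. by move=> z _; split; apply: eq_bigr => j _ /=; field. Qed.

Lemma comb_span n (x : oa R) : oa_wf x -> exists a b c, oa_eqmod (2 * n) x (comb n a b c).
Proof.
rewrite mul2n.
case=> lp lq aq; have [al [be ep]] := laurent_sh_poly2_expansion n lp.
have [be' eq] := antisym_sh_poly2_expansion n lq aq.
exists (fun j => be j - be' j), (fun j => - be j - be' j), al.
have ec := comb_sh_poly2 n (fun j => be j - be' j) (fun j => - be j - be' j) al.
split.
- apply: eqmod_trans ep _; apply: eqmod_eq => z nz; rewrite (proj1 (ec z nz)).
  by apply: eq_bigr => j _; field.
- apply: eqmod_trans eq _; apply: eqmod_eq => z nz; rewrite (proj2 (ec z nz)).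
  by apply: eq_bigr => j _; field.
Qed.

Lemma comb_eqmod0 n a b c : oa_eqmod (2 * n) (comb n a b c) (oa0 R) ->
  forall j, (j < n)%N -> [/\ a j = 0, b j = 0 & c j = 0].
Proof.
rewrite mul2n.
case=> d1 d2 j ltjn.
have [c0 ab0] : c j = 0 /\ (a j - b j) / 2%:R = 0.
  apply: (@sh_poly2_divisible_eq0 _ n c (fun j => (a j - b j) / 2%:R) _ j ltjn).
  apply: eq_divisible d1 => z nz.
  by rewrite subr0; case: (comb_sh_poly2 n a b c nz).
have [_ ab0'] : 0 = 0 :> C /\ - (a j + b j) / 2%:R = 0.
  apply: (@sh_poly2_divisible_eq0 _ n (fun _ => 0) (fun j => - (a j + b j) / 2%:R) _ j ltjn).
  apply: eq_divisible d2 => z nz.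
  by rewrite subr0; case: (comb_sh_poly2 n a b c nz).
have ea : a j = (a j - b j) / 2%:R - (- (a j + b j) / 2%:R) by field.
have eb : b j = - ((a j - b j) / 2%:R) - (- (a j + b j) / 2%:R) by field.
by split=> //; [rewrite ea | rewrite eb]; rewrite ab0 ab0'; ring.
Qed.

End ModelBasis.

Section OnsagerQuotient.
Variables (R : realType) (l : nat).
Hypothesis l_gt0 : (0 < l)%N.
Local Notation C := (R[i]).
Local Notation L := (2 * l)%N.

Definition ssum (z : C) :=
  2%:R * (z - 1) - \sum_(1 <= k < L) (-1) ^+ k * (2%:R * (z - 1) ^+ k).

(* A geometric sum in [1 - t]; the parity of [L] makes the remainder [(t - 1)^L]. *)
Lemma ssum_eq z : z != 0 -> ssum z = 4%:R * sh z + 2%:R * (z - 1) ^+ L / z.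
Proof.
move=> nz; rewrite /ssum.
have L_gt0 : (0 < L)%N by rewrite muln_gt0.
have e0 := @big_ltn C 0 +%R 0%N L (fun k => (-1) ^+ k * (2%:R * (z - 1) ^+ k)) L_gt0.
have e1 : \sum_(0 <= k < L) (-1) ^+ k * (2%:R * (z - 1) ^+ k) = 2%:R * \sum_(k < L) (1 - z) ^+ k.
  rewrite big_mkord mulr_sumr; apply: eq_bigr => k _.
  by rewrite mulrCA -exprMn mulN1r opprB.
have e2 := subrX1 (1 - z) L.
have e3 : (1 - z) ^+ L = (z - 1) ^+ L by rewrite exprM [in RHS]exprM -sqrrN opprB.
rewrite e1 e3 in e0 e2; rewrite (_ : 1 - z - 1 = - z) in e2; last by ring.
move: (\sum_(1 <= k < L) _) (\sum_(k < L) (1 - z) ^+ k) ((z - 1) ^+ L) e0 e2 => S1 Sg S e0 e2.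
have -> : S1 = 2%:R * Sg - 2%:R by rewrite e0 !expr0 mulr1 mul1r; ring.
have -> : Sg = (1 - S) / z by rewrite -[1 - S]opprB e2; field.
by rewrite /sh; field.
Qed.

Lemma Ssum_models : models L (Ssum R l) (fun z => 4%:R * sh z, fun _ => 0).
Proof.
exists (ssum, fun _ => 0); split.
- move=> z nz; rewrite /Ssum /X /OA_elt /mkL -!/(sl2 _ _ _).
  rewrite (eq_bigr (fun k => sl2 ((-1) ^+ k * (2%:R * (z - 1) ^+ k))
                                 ((-1) ^+ k * (2%:R * (z^-1 - 1) ^+ k)) ((-1) ^+ k * 0))).
    by rewrite sl2_sum sl2B [in X in sl2 _ _ X]big1 ?subr0 // => k _; rewrite mulr0.
  by move=> k _; rewrite sl2Z.
- split=> /=; [rewrite /ssum; laurent_closure; apply: laurent_sum => k; laurent_closure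
              | laurent_closure | by move=> z _; rewrite oppr0].
- split; last exact: eqmod_refl.
  exists (fun z => 2%:R * z^-1); split; first laurent_closure.
  by move=> z nz /=; rewrite ssum_eq //; field.
Qed.

Lemma Y1_models : models L (Y R 1) (fun _ => 0, fun z => - (2%:R * sh z)).
Proof.
apply: represents_models.
  by move=> z nz; rewrite /Y /OA_elt /mkL -!/(sl2 _ _ _) /sh; congr sl2; rewrite /= !expr1; field.
have ls := laurent_sh R.
split=> /=; [laurent_closure | laurent_closure | by move=> z nz; rewrite sh_compV // mulrN].
Qed.

Lemma E0_models : models L (E0 R l) (Em R 0).
Proof.
apply: models_eqmod
  (models_add (models_scale 4%:R^-1 Y1_models) (models_scale 8%:R^-1 Ssum_models)) _.
by apply: oa_eqmod_eq => z _ /=; rewrite expr0 mul1r; split; field.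
Qed.

Lemma F0_models : models L (F0 R l) (Fm R 0).
Proof.
apply: models_ext (models_eqmod (models_add (models_scale 4%:R^-1 Y1_models)
  (models_scale (- 8%:R^-1) Ssum_models)) _) => [z _|]; first by rewrite /ladd /lscale scaleNr.
by apply: oa_eqmod_eq => z _ /=; rewrite expr0 mul1r; split; field.
Qed.

Lemma H0_models : models L (H0 R) (Hm R 0).
Proof.
rewrite /H0; apply: models_eqmod (models_scale 2%:R^-1 (X_models R L 0)) _.
by apply: oa_eqmod_eq => z _ /=; rewrite !expr0 mulr1 mulVf ?mulr0 // two_neq0.
Qed.

Lemma H1_models : models L (H1 R l) (Hm R 1).
Proof.
exact: models_bracket (oa_wf_Em R 0) (oa_wf_Fm R 0) E0_models F0_models (Em_Fm_bracket 0 0).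
Qed.

Lemma E_models j : models L (E R l j) (Em R j).
Proof.
elim: j => [|j IHj]; first exact: E0_models.
apply: models_eqmod (models_scale _ (models_bracket (oa_wf_Hm R 1) (oa_wf_Em R j)
  H1_models IHj (Hm_Em_bracket 1 j))) _.
by apply: oa_eqmod_eq => z _ /=; rewrite add1n; split; field.
Qed.

Lemma F_models j : models L (F R l j) (Fm R j).
Proof.
elim: j => [|j IHj]; first exact: F0_models.
apply: models_eqmod (models_scale _ (models_bracket (oa_wf_Hm R 1) (oa_wf_Fm R j)
  H1_models IHj (Hm_Fm_bracket 1 j))) _.
by apply: oa_eqmod_eq => z _ /=; rewrite add1n; split; field.
Qed.

Lemma EF_models j k : models L (lbr (E R l j) (F R l k)) (Hm R (j + k).+1).
Proof.
exact: models_bracket (oa_wf_Em R j) (oa_wf_Fm R k) (E_models j) (F_models k) (Em_Fm_bracket j k).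
Qed.

Lemma H_models m : models L (H R l m) (Hm R m).
Proof.
case: m => [|m]; first exact: H0_models.
by have := EF_models (minn m l.-1) (m - minn m l.-1); rewrite subnKC ?geq_minl.
Qed.

Lemma HE_models j k : models L (lbr (H R l j) (E R l k)) (oa_scale 2%:R (Em R (j + k))).
Proof.
exact: models_bracket (oa_wf_Hm R j) (oa_wf_Em R k) (H_models j) (E_models k) (Hm_Em_bracket j k).
Qed.

Lemma HF_models j k : models L (lbr (H R l j) (F R l k)) (oa_scale (- 2%:R) (Fm R (j + k))).
Proof.
exact: models_bracket (oa_wf_Hm R j) (oa_wf_Fm R k) (H_models j) (F_models k) (Hm_Fm_bracket j k).
Qed.

Lemma EE_models j k : models L (lbr (E R l j) (E R l k)) (oa0 R).
Proof.
exact: models_bracket (oa_wf_Em R j) (oa_wf_Em R k) (E_models j) (E_models k) (Em_Em_bracket j k).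
Qed.

Lemma FF_models j k : models L (lbr (F R l j) (F R l k)) (oa0 R).
Proof.
exact: models_bracket (oa_wf_Fm R j) (oa_wf_Fm R k) (F_models j) (F_models k) (Fm_Fm_bracket j k).
Qed.

Lemma Ez_models m : models L (Ez R l m) (Em R m).
Proof.
rewrite /Ez; case: ltnP => [_|le_lm]; first exact: E_models.
by apply: models_eqmod (models0 _ _) _; apply: oa_eqmod_sym; apply: Em_vanish.
Qed.

Lemma Fz_models m : models L (Fz R l m) (Fm R m).
Proof.
rewrite /Fz; case: ltnP => [_|le_lm]; first exact: F_models.
by apply: models_eqmod (models0 _ _) _; apply: oa_eqmod_sym; apply: Fm_vanish.
Qed.

Lemma Hz_models m : models L (Hz R l m) (Hm R m).
Proof.
rewrite /Hz; case: ltnP => [_|le_lm]; first exact: H_models.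
by apply: models_eqmod (models0 _ _) _; apply: oa_eqmod_sym; apply: Hm_vanish.
Qed.

Lemma lincomb_models a b c : models L (lincomb R l a b c) (comb l a b c).
Proof.
apply: (models_sum (index_enum 'I_l) xpredT (x := fun j : 'I_l =>
  ladd (ladd (lscale (a j) (E R l j)) (lscale (b j) (F R l j))) (lscale (c j) (H R l j)))).
move=> j; apply: models_add; first apply: models_add; apply: models_scale;
  [exact: E_models | exact: F_models | exact: H_models].
Qed.

Lemma lincomb_span x : in_OA x -> exists a b c, qeq L x (lincomb R l a b c).
Proof.
case=> p [q [lp lq aq ex]]; have wpq : oa_wf ((p, q) : oa R) by [].
have [a [b [c e]]] := comb_span l wpq.
exists a, b, c; apply: qeq_models (lincomb_models a b c).
exact: models_eqmod (represents_models (a := (p, q)) _ ex wpq) e.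
Qed.

Lemma lincomb_free a b c : in_I L (lincomb R l a b c) ->
  forall j, (j < l)%N -> [/\ a j = 0, b j = 0 & c j = 0].
Proof. by move/(models_in_I (lincomb_models a b c)); apply: comb_eqmod0. Qed.

End OnsagerQuotient.

Theorem theorem4 (R : realType) (l : nat) :
  (1 <= l)%N ->
  let L := (2 * l)%N in
  (* (i) *)
  ((forall j k : nat, (j.+2 <= l)%N -> (1 <= k)%N -> (k.+1 <= l)%N ->
      qeq L (lbr (E R l j.+1) (F R l k.-1)) (lbr (E R l j) (F R l k))) /\
   (forall j k : nat, (j < l)%N -> (k < l)%N ->
      qeq L (lbr (E R l j) (F R l k)) (H R l (j + k).+1)) /\
   qeq L (H R l 1) (H1 R l)) /\
  (* (ii) *)
  ((forall j : nat, (j < l)%N ->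
      [/\ in_OA (E R l j), in_OA (F R l j) & in_OA (H R l j)]) /\
   (forall x : loop R, in_OA x ->
      exists a b c : nat -> R[i], qeq L x (lincomb R l a b c)) /\
   (forall a b c : nat -> R[i], in_I L (lincomb R l a b c) ->
      forall j : nat, (j < l)%N -> [/\ a j = 0, b j = 0 & c j = 0]) /\
   (forall m : nat, (l <= m)%N -> (m <= L - 1)%N -> qeq L (H R l m) (lzero R))) /\
  (* (iii) *)
  (forall j k : nat, (j < l)%N -> (k < l)%N ->
     [/\ qeq L (lbr (E R l j) (F R l k)) (Hz R l (j + k).+1),
         qeq L (lbr (H R l j) (E R l k)) (lscale 2%:R (Ez R l (j + k))),
         qeq L (lbr (H R l j) (F R l k)) (lscale (- 2%:R) (Fz R l (j + k))),
         qeq L (lbr (E R l j) (E R l k)) (lzero R) &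
         qeq L (lbr (F R l j) (F R l k)) (lzero R)]).
Proof.
move=> l_gt0 L; rewrite {}/L.
have mE := E_models R l_gt0; have mF := F_models R l_gt0; have mH := H_models R l_gt0.
have mEF := EF_models R l_gt0; have m0 := models0 R (2 * l).
split; [split; [|split] | split; [split; [|split; [|split]] |]].
- move=> j k _ k_gt0 _; apply: qeq_models (mEF j.+1 k.-1) _.
  by rewrite addSnnS prednK //; apply: mEF.
- by move=> j k _ _; apply: qeq_models (mEF j k) (mH _).
- exact: qeq_models (mH 1%N) (H1_models R l_gt0).
- by move=> j _; split; apply: models_in_OA; [apply: mE | apply: mF | apply: mH].
- exact: lincomb_span.
- exact: lincomb_free.
- move=> m le_lm _; apply: qeq_models (mH m) (models_eqmod m0 _).
  exact: oa_eqmod_sym (Hm_vanish R le_lm).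
move=> j k _ _; split.
- exact: qeq_models (mEF j k) (Hz_models R l_gt0 _).
- exact: qeq_models (HE_models R l_gt0 j k) (models_scale _ (Ez_models R l_gt0 _)).
- exact: qeq_models (HF_models R l_gt0 j k) (models_scale _ (Fz_models R l_gt0 _)).
- exact: qeq_models (EE_models R l_gt0 j k) m0.
- exact: qeq_models (FF_models R l_gt0 j k) m0.
Qed.
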